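(* Let $n$ be an even integer, $Q=P^{\alpha_2}$, $w^{ss}_{\min}\in W^Q$ the element corresponding to $(\frac n2,n)$, and $\xi\in X(w^{ss}_{\min})^{ss}_T(\mathcal{L}(\frac n2\omega_2))$. Let $X_1,\ldots,X_d$ be the standard monomial basis of $H^0(G_{2,n},\mathcal{L}(\frac n2\omega_2))^T$, with $X_1=\prod_{i=1}^{n/2}p_{i,\frac n2+i}$. Then for every $w\in W^{P^{\alpha_{n/2}}}$ with $w\neq \mathrm{id}$ and $w\ne w_0^{S\setminus\{\alpha_{n/2}\}}$ there exists $i\neq1$ with $X_i(w\xi)\neq0$.
   Context: $G=SL(n,\mathbb{C})$, $T$ the diagonal torus, $B$ the upper triangular Borel subgroup, $W=S_n$ acting on $G/Q$ via permutation matrices. $G_{2,n}=G/Q$ is the Grassmannian of 2-planes in $\mathbb{C}^n$, $X(u)=\overline{BuQ}/Q$ for $u\in W^Q\cong I(2,n)$. $p_{a,b}$ ($a<b$) are the Plücker coordinates, sections of $\mathcal{L}(\omega_2)=\mathcal{O}(1)$, with natural $T$-linearization; $ss$ denotes $T$-semistable points. A standard monomial of degree $\frac n2$ is a product $p_{\tau_1}\cdots p_{\tau_{n/2}}$ with $\tau_1\le\cdots\le\tau_{n/2}$ in $I(2,n)$ (componentwise); the $T$-invariant ones form a basis of $H^0(G_{2,n},\mathcal{L}(\frac n2\omega_2))^T$. $W^{P^{\alpha_{n/2}}}=\{v\in S_n:v(1)<\cdots<v(\frac n2),\ v(\frac n2+1)<\cdots<v(n)\}$ and $w_0^{S\setminus\{\alpha_{n/2}\}}$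 is its longest element, $i\mapsto \frac n2+i$, $\frac n2+i\mapsto i$ ($1\le i\le\frac n2$). ''$X_i(y)\ne0$'' means the section $X_i$ does not vanish at the point $y$. *)

From HB Require Import structures.
From mathcomp Require Import Rstruct complex.
From mathcomp Require Import all_boot all_order all_algebra all_fingroup.
From Stdlib Require Rdefinitions.

Set Implicit Arguments.
Unset Strict Implicit.
Unset Printing Implicit Defensive.

Import Order.TTheory GRing.Theory Num.Theory.
Local Open Scope ring_scope.

Definition Cplx : closedFieldType := (Rdefinitions.R)[i].

Section Grass.
Variables (F : fieldType) (n : nat).

(* A point of G_{2,n} is the row space of a rank-2 matrix M : 'M_(2,n)
   (rows are vectors of F^n; indices are 0-based: 'I_n = {0,...,n-1}). *)
Definition is_Gpoint (M : 'M[F]_(2, n)) : Prop := \rank M = 2%N.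

Definition pl (M : 'M[F]_(2, n)) (ab : 'I_n * 'I_n) : F :=
  M ord0 ab.1 * M 1 ab.2 - M ord0 ab.2 * M 1 ab.1.

(* A section of L(omega_2)^{d} = O(d): a homogeneous degree-d polynomial in the
   Plücker coordinates, evaluated on representatives.  A general such
   polynomial is  sum_{ts} c_ts prod_i p_{ts_i}. *)
Definition section (d : nat) (c : {ffun d.-tuple ('I_n * 'I_n) -> F})
    (M : 'M[F]_(2, n)) : F :=
  \sum_(ts : d.-tuple ('I_n * 'I_n)) c ts * \prod_(i < d) pl M (tnth ts i).

Definition monomial (d : nat) (ts : d.-tuple ('I_n * 'I_n)) (M : 'M[F]_(2, n)) : F :=
  \prod_(i < d) pl M (tnth ts i).

(* Torus T of SL_n: diagonal matrices diag(t) with prod t_i = 1, acting on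
   F^n (row vectors) by v |-> v * diag(t). *)
Definition T_invariant (s : 'M[F]_(2, n) -> F) : Prop :=
  forall (t : 'rV[F]_n), \prod_(i < n) t ord0 i = 1 ->
  forall M : 'M[F]_(2, n), is_Gpoint M -> s (M *m diag_mx t) = s M.

(* T-semistable points for L(m omega_2): some T-invariant section of some
   positive tensor power L^{k} = O(k*m) does not vanish at the point. *)
Definition T_semistable (m : nat) (M : 'M[F]_(2, n)) : Prop :=
  exists k : nat, (0 < k)%N /\
    exists c : {ffun (k * m)%N.-tuple ('I_n * 'I_n) -> F},
      T_invariant (section c) /\ section c M != 0.

(* Schubert variety X(u) for u = (m, n) (1-based), Q = P^{alpha_2}, B upper
   triangular: X(u) = { V : dim (V cap E_m) >= 1 }, E_m = span(e_1..e_m).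
   (The second condition dim(V cap E_n) >= 2 is automatic.) *)
Definition in_X_wssmin (m : nat) (M : 'M[F]_(2, n)) : Prop :=
  exists v : 'rV[F]_n, [/\ v != 0, (v <= M)%MS &
     forall j : 'I_n, (m <= j)%N -> v ord0 j = 0].

(* Action of a permutation w in W = S_n via permutation matrices:
   w e_i = e_{w(i)}, so on row vectors v |-> v * perm_mx w. *)
Definition act_perm (w : 'S_n) (M : 'M[F]_(2, n)) : 'M[F]_(2, n) :=
  M *m perm_mx w.

End Grass.

Section Combinatorics.
Variable n : nat.

Definition standard (d : nat) (ts : d.-tuple ('I_n * 'I_n)) : Prop :=
  (forall i : 'I_d, ((tnth ts i).1 < (tnth ts i).2)%N) /\
  (forall i j : 'I_d, (i <= j)%N ->
     ((tnth ts i).1 <= (tnth ts j).1)%N /\ ((tnth ts i).2 <= (tnth ts j).2)%N).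

(* The tuple of X_1 = prod_{i=1}^{m} p_{i, m+i} (0-based: (i, m+i), i < m). *)
Definition is_X1 (m : nat) (ts : m.-tuple ('I_n * 'I_n)) : Prop :=
  forall i : 'I_m, nat_of_ord (tnth ts i).1 = nat_of_ord i /\
                   nat_of_ord (tnth ts i).2 = (nat_of_ord i + m)%N.

Definition in_WP (m : nat) (w : 'S_n) : Prop :=
  forall i j : 'I_n, (i < j)%N -> ((i < m)%N = (j < m)%N) -> (w i < w j)%N.

Definition is_w0P (m : nat) (w : 'S_n) : Prop :=
  forall i : 'I_n, nat_of_ord (w i) = (if (i < m)%N then (i + m)%N else (i - m)%N).

End Combinatorics.

(* Each set S of coordinates gives a one-parameter subgroup of T; comparing
   the powers of its parameter in a T-invariant section that does not vanish
   at xi yields the Hilbert-Mumford bound 2|S| <= n c as soon as every nonzero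
   Pluecker coordinate of xi has at most c indices in S.  For S a single index
   (c = 0) this says that xi has no zero column; for S the zero set of the
   vector v of xi lying in E_m (c = 1) it says that v_i != 0 for i <= m, since
   v already vanishes on the last m coordinates.  Hence p_{i,m+i}(xi) != 0 for
   all i, so the product of the p_{w(i),w(m+i)} is a T-invariant standard
   monomial not vanishing at w xi, and it is X_1 only if {w(1), w(m+1)} =
   {1, m+1}, which for w in W^P forces w = id or w = w_0. *)

From HB Require Import structures.
From mathcomp Require Import Rstruct complex.
From mathcomp Require Import all_boot all_order all_algebra all_fingroup.
From mathcomp Require Import ring zify.

Set Implicit Arguments.
Unset Strict Implicit.
Unset Printing Implicit Defensive.

Import Order.TTheory GRing.Theory Num.Theory.
Local Open Scope ring_scope.

Section Plucker.
Variables (F : fieldType) (n : nat).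
Implicit Types (M : 'M[F]_(2, n)) (v : 'rV[F]_n) (a b : 'I_n).

Lemma pl_diag_mx M t ab : pl (M *m diag_mx t) ab = t 0 ab.1 * t 0 ab.2 * pl M ab.
Proof. by rewrite /pl mul_mx_diag !mxE; ring. Qed.

Lemma pl_perm_mx M (w : 'S_n) a b : pl (M *m perm_mx w) (w a, w b) = pl M (a, b).
Proof.
by rewrite /pl -[w]invgK -col_permE !mxE /= invgK !(permK w).
Qed.

Definition sort_pair a b : 'I_n * 'I_n := if (a < b)%N then (a, b) else (b, a).

Lemma sort_pairE a b :
  (sort_pair a b).1 = minn a b :> nat /\ (sort_pair a b).2 = maxn a b :> nat.
Proof. by rewrite /sort_pair /minn /maxn; case: ltnP. Qed.

Lemma pl_sort_pair_eq0 M a b : (pl M (sort_pair a b) == 0) = (pl M (a, b) == 0).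
Proof.
rewrite /sort_pair; case: ifP => // _.
by rewrite -oppr_eq0 /pl /= opprB.
Qed.

Lemma pl_eq0_of_col_eq0 M a b : (col a M == 0) || (col b M == 0) -> pl M (a, b) = 0.
Proof.
have col0 c i : col c M = 0 -> M i c = 0.
  by move/colP/(_ i); rewrite !mxE.
by rewrite /pl => /orP[] /eqP/col0 z; rewrite /= !z ?mul0r ?mulr0 subrr.
Qed.

Lemma rowspace_entry v M : (v <= M)%MS ->
  exists al be, forall j, v 0 j = al * M 0 j + be * M 1 j.
Proof.
case/submxP=> D ->; exists (D 0 0), (D 0 1) => j.
rewrite !mxE !big_ord_recl big_ord0 addr0.
by have -> : lift ord0 ord0 = 1 :> 'I_2 by apply: val_inj.
Qed.

Lemma pl_eq0_of_rowspace v M a b : v != 0 -> (v <= M)%MS ->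
  v 0 a = 0 -> v 0 b = 0 -> pl M (a, b) = 0.
Proof.
move=> v0 /rowspace_entry[al [be vE]] va vb; apply/eqP; apply: contraR v0 => pl0.
have al_pl : al * pl M (a, b) = M 1 b * v 0 a - M 1 a * v 0 b.
  by rewrite !vE /pl /=; ring.
have be_pl : be * pl M (a, b) = M 0 a * v 0 b - M 0 b * v 0 a.
  by rewrite !vE /pl /=; ring.
rewrite va vb !mulr0 subrr in al_pl be_pl.
move/eqP: al_pl; move/eqP: be_pl; rewrite !mulf_eq0 (negbTE pl0) !orbF => /eqP be_0 /eqP al_0.
by apply/eqP/rowP => j; rewrite vE al_0 be_0 mxE !mul0r addr0.
Qed.

Lemma pl_neq0_of_rowspace v M a b : (v <= M)%MS ->
  v 0 a != 0 -> v 0 b = 0 -> col b M != 0 -> pl M (a, b) != 0.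
Proof.
move=> /rowspace_entry[al [be vE]] va vb; apply: contra => /eqP pl0.
have e0 : v 0 a * M 0 b = - be * pl M (a, b) + M 0 a * v 0 b.
  by rewrite !vE /pl; ring.
have e1 : v 0 a * M 1 b = al * pl M (a, b) + M 1 a * v 0 b.
  by rewrite !vE /pl; ring.
rewrite pl0 vb !mulr0 addr0 in e0 e1.
apply/eqP/colP => i; rewrite !mxE.
have /orP[/eqP-> | /eqP->] : (i == 0) || (i == 1) by case: i => [[|[|]]].
- by move/eqP: e0; rewrite mulf_eq0 (negbTE va) => /eqP.
- by move/eqP: e1; rewrite mulf_eq0 (negbTE va) => /eqP.
Qed.

End Plucker.

Section OneParameterSubgroups.
Variables (F : fieldType) (n : nat).
Hypothesis charF0 : [pchar F] =i pred0.
Implicit Types (xi : 'M[F]_(2, n)) (S : {set 'I_n}).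

Lemma pchar0_natr_inj : injective (fun k : nat => k%:R : F).
Proof.
suff le_inj i j : (i <= j)%N -> i%:R = j%:R :> F -> i = j.
  by move=> i j; case: (leqP i j) => [/le_inj//|/ltnW/le_inj + /esym] => /[apply].
move=> le_ij /eqP; rewrite eq_sym -subr_eq0 -natrB // ((pcharf0P _).1 charF0) subn_eq0.
by move=> le_ji; apply/eqP; rewrite eqn_leq le_ij.
Qed.

Definition index_count S (ab : 'I_n * 'I_n) : nat := (ab.1 \in S) + (ab.2 \in S).

Definition monomial_count S d (ts : d.-tuple ('I_n * 'I_n)) : nat :=
  \sum_(i < d) index_count S (tnth ts i).

(* The one-parameter subgroup of T acting by nu^(n - |S|) on S and by
   nu^(-|S|) off S multiplies p_ab by nu^(n * index_count S ab - 2|S|). *)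
Lemma section_one_parameter d (c : {ffun d.-tuple ('I_n * 'I_n) -> F}) S xi nu :
  is_Gpoint xi -> T_invariant (section c) -> nu != 0 ->
  nu ^+ (2 * d * #|S|) * section c xi =
  \sum_ts c ts * monomial ts xi * nu ^+ (n * monomial_count S ts).
Proof.
move=> Gxi Tinv nu0.
have sn : (#|S| <= n)%N by rewrite -[X in (_ <= X)%N]card_ord max_card.
set s := #|S| in sn *.
pose q := nu ^+ s; pose r := nu ^+ (n - s).
have q0 : q != 0 by rewrite expf_neq0.
have qr : nu ^+ n = q * r by rewrite -exprD subnKC.
pose t : 'rV[F]_n := \row_j (if j \in S then r else q^-1).
have det_t : \prod_(i < n) t 0 i = 1.
  rewrite (bigID (mem S)) /=.
  rewrite (eq_bigr (fun _ => r)); last by move=> i iS; rewrite mxE iS.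
  rewrite [X in _ * X](eq_bigr (fun _ => q^-1)); last first.
    by move=> i iS; rewrite mxE (negbTE iS).
  rewrite !prodr_const.
  have -> : #|[pred i | i \notin S]| = (n - s)%N.
    by rewrite -[X in (X - _)%N](card_ord n) -(cardC (mem S)) addKn.
  by rewrite /r /q -!exprM exprVn -exprM mulnC divff // expf_neq0.
rewrite -(Tinv t det_t xi Gxi) /section mulr_sumr; apply: eq_bigr => ts _.
rewrite /monomial /monomial_count big_distrr /= -prodrXr.
have -> : (2 * d * s = \sum_(i < d) 2 * s)%N.
  by rewrite sum_nat_const card_ord mulnAC mulnC.
rewrite -prodrXr mulrCA -mulrA -!big_split /=; congr (_ * _).
apply: eq_bigr => i _; rewrite pl_diag_mx /index_count !mxE mulnC exprM -/q.
case: (_ \in S); case: (_ \in S) => /=;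
  rewrite ?muln0 ?muln1 ?exprM ?qr ?expr0; by field; rewrite ?q0.
Qed.

Lemma section_eq0_of_count_bound d (c : {ffun d.-tuple ('I_n * 'I_n) -> F}) S xi C :
  is_Gpoint xi -> T_invariant (section c) ->
  (forall ts : d.-tuple ('I_n * 'I_n), monomial ts xi != 0 -> (monomial_count S ts <= C)%N) ->
  (n * C < 2 * d * #|S|)%N -> section c xi = 0.
Proof.
move=> Gxi Tinv countC ltN; set N := (2 * d * #|S|)%N in ltN.
pose P : {poly F} :=
  \sum_ts (c ts * monomial ts xi) *: 'X^(n * monomial_count S ts) - section c xi *: 'X^N.
have P_root nu : nu != 0 -> P.[nu] = 0.
  move=> nu0; rewrite hornerD hornerN horner_sum hornerZ hornerXn.
  under eq_bigr do rewrite hornerZ hornerXn.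
  by rewrite -(section_one_parameter S Gxi Tinv nu0) mulrC subrr.
have P0 : P = 0.
  apply: (@roots_geq_poly_eq0 _ P [seq i.+1%:R | i <- iota 0 (size P)]).
  - by apply/allP => _ /mapP[i _ ->]; apply/rootP/P_root; rewrite ((pcharf0P _).1 charF0).
  - by rewrite map_inj_uniq ?iota_uniq // => i j /pchar0_natr_inj [].
  - by rewrite size_map size_iota.
have /eqP := congr1 (coefp N) P0.
rewrite /= coefB coef_sum coefZ coefXn eqxx mulr1 coef0 big1 ?sub0r ?oppr_eq0 => [/eqP //|ts _].
rewrite coefZ coefXn; have [->|nz] := eqVneq (monomial ts xi) 0; first by rewrite mulr0 mul0r.
by rewrite gtn_eqF ?mulr0 // (leq_ltn_trans (leq_mul (leqnn n) (countC ts nz))).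
Qed.

End OneParameterSubgroups.

Section SemistablePoints.
Variables (F : fieldType) (n m : nat) (xi : 'M[F]_(2, n)).
Hypotheses (charF0 : [pchar F] =i pred0) (m_gt0 : (0 < m)%N).
Hypotheses (Gxi : is_Gpoint xi) (xi_ss : T_semistable m xi).

Lemma semistable_index_count S k :
  (forall ab, pl xi ab != 0 -> (index_count S ab <= k)%N) -> (2 * #|S| <= n * k)%N.
Proof.
move=> countS; case: xi_ss => e [e_gt0 [c [Tinv]]]; apply: contraTleq => lt_nk.
have d_gt0 : (0 < e * m)%N by rewrite muln_gt0 e_gt0.
rewrite negbK; apply/eqP/(section_eq0_of_count_bound charF0 Gxi Tinv (C := (e * m * k)%N)).
  move=> ts nz; apply: (@leq_trans (\sum_(i < e * m) k)).
    2: by rewrite sum_nat_const card_ord.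
  apply: leq_sum => i _; apply: countS; apply: contraNneq nz => pl0.
  by rewrite /monomial (bigD1 i) //= pl0 mul0r.
by rewrite mulnCA [X in (_ < X)%N]mulnAC [X in (_ < X)%N]mulnC ltn_pmul2l.
Qed.

Lemma semistable_col_neq0 j : col j xi != 0.
Proof.
apply/eqP => col0.
suff : (2 * #|[set j]| <= n * 0)%N by rewrite cards1 muln0.
apply: semistable_index_count => -[a b]; apply: contraR.
rewrite -ltnNge /index_count !inE /= => hit_j; apply/eqP/pl_eq0_of_col_eq0.
by case: eqP hit_j => [->|_]; case: eqP => [->|//]; rewrite col0 eqxx ?orbT.
Qed.

Lemma semistable_rowspace_zeros (v : 'rV[F]_n) : v != 0 -> (v <= xi)%MS ->
  (2 * #|[set j | v ord0 j == 0%R]| <= n)%N.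
Proof.
move=> v0 vxi; rewrite -[n in (_ <= n)%N]muln1.
apply: semistable_index_count => -[a b] pl_neq0; rewrite /index_count !inE /=.
case: eqP => [va|_]; case: eqP => [vb|_] //.
by rewrite (pl_eq0_of_rowspace v0 vxi va vb) eqxx in pl_neq0.
Qed.

End SemistablePoints.

Section IncreasingOrdinals.
Variable m : nat.
Implicit Type f : 'I_m -> nat.

Lemma increasing_ord_gap f :
  (forall i j : 'I_m, (i < j)%N -> (f i < f j)%N) ->
  forall i j : 'I_m, (i <= j)%N -> (f i + (j - i) <= f j)%N.
Proof.
move=> f_incr i j le_ij; move: (j - i)%N (subnKC le_ij) => k.
elim: k j {le_ij} => [|k IHk] j ej.
  by rewrite addn0 (_ : i = j) //; apply: val_inj; rewrite /= -ej addn0.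
have lt_km : (i + k < m)%N by rewrite (leq_trans _ (ltn_ord j)) // -ej addnS.
have := IHk (Ordinal lt_km) erefl.
have := f_incr (Ordinal lt_km) j; rewrite /= -ej addnS ltnSn => /(_ isT).
lia.
Qed.

Lemma increasing_ord_shift f a :
  (forall i j : 'I_m, (i < j)%N -> (f i < f j)%N) ->
  (forall i, a <= f i)%N -> (forall i, f i < a + m)%N ->
  forall i, f i = (a + i)%N.
Proof.
move=> f_incr lo hi i.
have m_gt0 : (0 < m)%N by apply: leq_ltn_trans (ltn_ord i).
have lt_pm : (m.-1 < m)%N by rewrite ltn_predL.
have := increasing_ord_gap f_incr (i := Ordinal m_gt0) (j := i) isT.
have := increasing_ord_gap f_incr (i := i) (j := Ordinal lt_pm).
rewrite /= -ltnS (ltn_predK m_gt0) => /(_ (ltn_ord i)).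
have := lo (Ordinal m_gt0); have := hi (Ordinal lt_pm).
lia.
Qed.

Lemma increasing_halves (f g : 'I_m -> 'I_(m + m)) (i0 : 'I_m) :
  (forall i j, f i != g j) ->
  (forall i j : 'I_m, (i < j)%N -> (f i < f j)%N) ->
  (forall i j : 'I_m, (i < j)%N -> (g i < g j)%N) ->
  i0 = 0 :> nat -> f i0 = m :> nat ->
  (forall i, f i = m + i :> nat) /\ (forall i, g i = i :> nat).
Proof.
move=> fg f_incr g_incr i00 fi0.
have f_shift : forall i, f i = m + i :> nat.
  apply: (increasing_ord_shift (f := fun i => nat_of_ord (f i))) => // i.
  by have := increasing_ord_gap f_incr (i := i0) (j := i); rewrite i00 fi0 => /(_ isT); lia.
split=> //; apply: (increasing_ord_shift (f := fun i => nat_of_ord (g i)) (a := 0)) => // i.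
rewrite ltnNge; apply/negP => le_mg.
have lt_gm : (g i - m < m)%N by move: (ltn_ord (g i)); lia.
have /eqP := fg (Ordinal lt_gm) i; apply; apply: val_inj.
by rewrite /= f_shift /=; lia.
Qed.

End IncreasingOrdinals.

Section HalvesTuple.
Variables (m : nat) (w : 'S_(m + m)).

Definition halves_tuple : m.-tuple ('I_(m + m) * 'I_(m + m)) :=
  [tuple sort_pair (w (lshift m q)) (w (rshift m q)) | q < m].

Lemma halves_tuple_T_invariant (F : fieldType) : T_invariant (@monomial F _ _ halves_tuple).
Proof.
move=> t det_t M _; rewrite /monomial.
under eq_bigr do rewrite pl_diag_mx.
rewrite big_split /= -[RHS]mul1r; congr (_ * _).
have pair_weight q : t 0 (tnth halves_tuple q).1 * t 0 (tnth halves_tuple q).2 =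
    t 0 (w (lshift m q)) * t 0 (w (rshift m q)).
  by rewrite tnth_mktuple /sort_pair; case: ifP => // _; rewrite mulrC.
rewrite (eq_bigr _ (fun q _ => pair_weight q)) big_split -[RHS]det_t.
by rewrite [RHS](reindex_inj (@perm_inj _ w)) big_split_ord.
Qed.

Lemma monomial_halves_tuple_neq0 (F : fieldType) (xi : 'M[F]_(2, m + m)) :
  (forall q, pl xi (lshift m q, rshift m q) != 0) ->
  monomial halves_tuple (act_perm w xi) != 0.
Proof.
move=> pl_neq0; apply/prodf_neq0 => q _.
by rewrite tnth_mktuple pl_sort_pair_eq0 pl_perm_mx.
Qed.

Let w_lshift_neq_rshift (i j : 'I_m) : w (lshift m i) != w (rshift m j).
Proof. by rewrite (inj_eq perm_inj) -val_eqE /= neq_ltn ltn_addr. Qed.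

Hypothesis w_WP : in_WP m w.

Let w_lshift_incr (i j : 'I_m) : (i < j)%N -> (w (lshift m i) < w (lshift m j))%N.
Proof. by move=> lt_ij; apply: w_WP; rewrite //= !ltn_ord. Qed.

Let w_rshift_incr (i j : 'I_m) : (i < j)%N -> (w (rshift m i) < w (rshift m j))%N.
Proof. by move=> lt_ij; apply: w_WP; rewrite /= ?ltn_add2l // !ltnNge !leq_addr. Qed.

Lemma halves_tuple_standard : standard halves_tuple.
Proof.
split=> [i | i j le_ij]; rewrite !tnth_mktuple.
  have [-> ->] := sort_pairE (w (lshift m i)) (w (rshift m i)).
  by move: (w_lshift_neq_rshift i i); rewrite -val_eqE /=; lia.
have [-> ->] := sort_pairE (w (lshift m i)) (w (rshift m i)).
have [-> ->] := sort_pairE (w (lshift m j)) (w (rshift m j)).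
move: le_ij; rewrite leq_eqVlt => /orP[/eqP/val_inj -> | lt_ij]; first by rewrite !leqnn.
by move: (w_lshift_incr lt_ij) (w_rshift_incr lt_ij); lia.
Qed.

Lemma halves_tuple_X1 : (0 < m)%N -> is_X1 halves_tuple -> w = 1%g \/ is_w0P m w.
Proof.
move=> m_gt0 /(_ (Ordinal m_gt0)); rewrite tnth_mktuple.
set i0 := Ordinal m_gt0; have i00 : i0 = 0 :> nat by [].
have [-> ->] := sort_pairE (w (lshift m i0)) (w (rshift m i0)); rewrite i00 add0n.
have w_rshift_neq_lshift i j : w (rshift m i) != w (lshift m j).
  by rewrite eq_sym w_lshift_neq_rshift.
case: (leqP (w (lshift m i0)) (w (rshift m i0))) => _ [_ wmax].
- have [w_rshift w_lshift] := increasing_halves w_rshift_neq_lshift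
    w_rshift_incr w_lshift_incr i00 wmax.
  left; apply/permP => i; apply: ord_inj; rewrite perm1.
  by case: (split_ordP i) => j ->; rewrite ?w_lshift ?w_rshift.
- have [w_lshift w_rshift] := increasing_halves w_lshift_neq_rshift
    w_lshift_incr w_rshift_incr i00 wmax.
  right => i; case: (split_ordP i) => j ->; rewrite ?w_lshift ?w_rshift /=.
    by rewrite addnC.
  by rewrite addKn.
Qed.

End HalvesTuple.

Lemma lshift_notin_of_rshift_sub m (P : {set 'I_(m + m)}) :
  (forall q : 'I_m, rshift m q \in P) -> (2 * #|P| <= m + m)%N ->
  forall q : 'I_m, lshift m q \notin P.
Proof.
move=> rshift_P card_P q; apply/negP => lshift_P.
have : lshift m q |: [set rshift m i | i : 'I_m] \subset P.
  by rewrite subUset sub1set lshift_P; apply/subsetP => _ /imsetP[i _ ->].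
move/subset_leq_card; rewrite cardsU1 card_imset ?card_ord; last exact: rshift_inj.
have -> : lshift m q \in [set rshift m i | i : 'I_m] = false.
  by apply/imsetP => -[i _ /(congr1 val)] /=; move: (ltn_ord q); lia.
rewrite /= add1n; move: card_P; set k := #|P|; lia.
Qed.

Theorem lemma7p8 (m n : nat) (Hn : n = (m.*2)%N) (Hm : (0 < m)%N)
  (xi : 'M[Cplx]_(2, n))
  (Hxi : is_Gpoint xi) (HX : in_X_wssmin m xi) (Hss : T_semistable m xi)
  (w : 'S_n) (HwP : in_WP m w) (Hid : w != 1%g) (Hw0 : ~ is_w0P m w) :
  exists ts : m.-tuple ('I_n * 'I_n),
    [/\ standard ts, T_invariant (@monomial Cplx n m ts), ~ is_X1 ts &
        @monomial Cplx n m ts (act_perm w xi) != 0].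
Proof.
rewrite -addnn in Hn; subst n.
have charC0 : [pchar Cplx] =i pred0 := @pchar_num (Rdefinitions.R)[i].
case: HX => v [v_neq0 v_xi v_right].
have v_left (q : 'I_m) : v 0 (lshift m q) != 0.
  have := semistable_rowspace_zeros charC0 Hm Hxi Hss v_neq0 v_xi.
  move/(lshift_notin_of_rshift_sub _)/(_ q); rewrite inE; apply=> i.
  by rewrite inE v_right //= leq_addr.
exists (halves_tuple w); split.
- exact: halves_tuple_standard.
- exact: halves_tuple_T_invariant.
- by case/(halves_tuple_X1 HwP Hm) => [w1|//]; rewrite w1 eqxx in Hid.
- apply: monomial_halves_tuple_neq0 => q.
  apply: (pl_neq0_of_rowspace v_xi (v_left q)); first by rewrite v_right //= leq_addr.
  exact: semistable_col_neq0 charC0 Hm Hxi Hss _.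
Qed.
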